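(* Let $T$ be an aperiodic $1$-bounded streaming $\omega$-string transducer with variable set $\mathcal X$. For all variables $X,Y\in\mathcal X$ there exists a first-order formula $\phi_{X\rightsquigarrow Y}(x,y)$ with two free variables such that for all strings $s\in\mathrm{dom}(T)$ and any two positions $i\le j$ of $s$, $s\models\phi_{X\rightsquigarrow Y}(i,j)$ iff $(q_i,X)\rightsquigarrow_1^{s[i+1:j]}(q_j,Y)$, where $q_0q_1\cdots$ is the accepting run of $T$ on $s$.
   Context: Streaming $\omega$-string transducer (SST): $T=(\Sigma,\Gamma,Q,q_0,\delta,\mathcal X,\rho,F)$ with $\delta:Q\times\Sigma\to Q$, finite variables $\mathcal X$, copyless updates $\rho:Q\times\Sigma\to[\mathcal X\to(\Gamma\cup\mathcal X)^*]$, partial output function $F:2^Q\rightharpoonup\mathcal X^*$. Run on $s=a_1a_2\cdots$: $q_0q_1\cdots$, $q_i=\delta(q_{i-1},a_i)$ ($q_i$ is the state after reading the first $i$ letters); it is accepting and $s\in\mathrm{dom}(T)$ iff the set of states visited infinitely often is in $\mathrm{dom}(F)$. $s[i+1:j]$ denotes the factor $a_{i+1}\cdots a_j$ (empty if $i=j$). For $u\in\Sigma^*$, states $p,q$ and variables $X,Y$: with $\sigma$ the composition of the updates along the run from $p$ on $u$ (starting from the identity substitution), $(p,X)\rightsquigarrow^u_k(q,Y)$ means that this run ends in $q$ and $X$ occurs exactly $k$ times in $\sigma(Y)$. Transition matrices: with $\mathrm{dom}(F)=\{F_1,\dots,F_n\}$, $M_u[(p,X)][(q,Y)]=\bot$ if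 the run from $p$ on $u$ does not end in $q$, else $(k,(x_1,\dots,x_n))$ where $(p,X)\rightsquigarrow^u_k(q,Y)$ and, with $S$ the set of visited states, $x_i=0$ if $S\not\subseteq F_i$, $1$ if $S=F_i$, $S$ if $S\subsetneq F_i$. $T$ is aperiodic if some $m\ge1$ gives $M_{u^m}=M_{u^{m+1}}$ for all $u$, and $1$-bounded if all non-$\bot$ entries $(k,\dots)$ satisfy $k\le1$. First-order formulas are over $\omega$-strings with positions $\{1,2,\dots\}$, natural order and unary letter predicates. *)

From mathcomp Require Import all_boot.
Set Implicit Arguments. Unset Strict Implicit. Unset Printing Implicit Defensive.

Record sst (Sig Gam : finType) := SST {
  state : finType;
  init : state;
  delta : state -> Sig -> state;
  var : finType;
  rho : state -> Sig -> var -> seq (Gam + var);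
  copyless : forall q a (X : var),
      \sum_(Y : var) count (pred1 (inr X)) (rho q a Y) <= 1;
  outF : {set state} -> option (seq var)
}.

Arguments init {Sig Gam} s.
Arguments delta {Sig Gam} s.
Arguments rho {Sig Gam} s.
Arguments outF {Sig Gam} s.

Section SST.
Variables (Sig Gam : finType) (T : sst Sig Gam).
Local Notation Q := (state T).
Local Notation X := (var T).

Definition dest (p : Q) (u : seq Sig) : Q := foldl (delta T) p u.

Definition visited (p : Q) (u : seq Sig) : {set Q} :=
  [set q in p :: scanl (delta T) p u].

Definition subst_apply (sigma : X -> seq (Gam + X)) (w : seq (Gam + X))
  : seq (Gam + X) :=
  flatten [seq match z with inl g => [:: inl g] | inr Z => sigma Z end | z <- w].

Fixpoint upd_comp (p : Q) (u : seq Sig) (sigma : X -> seq (Gam + X))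
  : X -> seq (Gam + X) :=
  match u with
  | [::] => sigma
  | a :: u' => upd_comp (delta T p a) u' (fun Y => subst_apply sigma (rho T p a Y))
  end.

Definition sigma_run (p : Q) (u : seq Sig) : X -> seq (Gam + X) :=
  upd_comp p u (fun Y => [:: inr Y]).

(* (p,X0) ~>^u_k (q,Y) *)
Definition flows (p : Q) (X0 : X) (u : seq Sig) (q : Q) (Y : X) (k : nat) : Prop :=
  dest p u = q /\ count (pred1 (inr X0)) (sigma_run p u Y) = k.

(* components x_i of transition-matrix entries: 0, 1, or the set S *)
Inductive xval := XZero | XOne | XSet of {set Q}.

Definition xcomp (S Fi : {set Q}) : xval :=
  if ~~ (S \subset Fi) then XZero else if S == Fi then XOne else XSet S.

(* Transition matrix M_u.  The tuple (x_1,...,x_n) indexed by dom(F) =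
   {F_1,...,F_n} is represented as a finite function on {set Q}, whose
   components outside dom(F) are fixed to XZero. *)
Definition trans_mx (u : seq Sig) (p : Q) (X0 : X) (q : Q) (Y : X)
  : option (nat * {ffun {set Q} -> xval}) :=
  if dest p u == q then
    Some (count (pred1 (inr X0)) (sigma_run p u Y),
          [ffun Fi => if outF T Fi is Some _ then xcomp (visited p u) Fi else XZero])
  else None.

Definition upow (u : seq Sig) (m : nat) : seq Sig := flatten (nseq m u).

Definition aperiodic : Prop :=
  exists m, 1 <= m /\
    forall u p X0 q Y, trans_mx (upow u m) p X0 q Y = trans_mx (upow u m.+1) p X0 q Y.

Definition one_bounded : Prop :=
  forall u p X0 q Y k v, trans_mx u p X0 q Y = Some (k, v) -> k <= 1.

(* omega-strings: s : nat -> Sig, with letter a_i = s (i-1) (positions i >= 1) *)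
Fixpoint run (s : nat -> Sig) (i : nat) : Q :=
  match i with 0 => init T | i'.+1 => delta T (run s i') (s i') end.

Definition in_dom (s : nat -> Sig) : Prop :=
  exists S : {set Q},
    (forall q, q \in S <-> forall n, exists m, n <= m /\ run s m = q) /\
    outF T S <> None.

(* factor s[i+1:j] = a_{i+1} ... a_j *)
Definition factor (s : nat -> Sig) (i j : nat) : seq Sig := [seq s k | k <- iota i (j - i)].

End SST.

Arguments dest {Sig Gam} T p u.
Arguments visited {Sig Gam} T p u.
Arguments sigma_run {Sig Gam} T p u.
Arguments flows {Sig Gam} T p X0 u q Y k.
Arguments trans_mx {Sig Gam} T u p X0 q Y.
Arguments aperiodic {Sig Gam} T.
Arguments one_bounded {Sig Gam} T.
Arguments run {Sig Gam} T s i.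
Arguments in_dom {Sig Gam} T s.
Arguments factor {Sig} s i j.

(* variables are natural numbers; positions are {1,2,...} *)
Inductive fo (Sig : Type) :=
| FLetter of Sig & nat
| FLt of nat & nat
| FEq of nat & nat
| FNot of fo Sig
| FAnd of fo Sig & fo Sig
| FEx of nat & fo Sig.

Fixpoint fo_sat (Sig : Type) (s : nat -> Sig) (nu : nat -> nat) (f : fo Sig) : Prop :=
  match f with
  | FLetter a x => s (nu x).-1 = a
  | FLt x y => nu x < nu y
  | FEq x y => nu x = nu y
  | FNot g => ~ fo_sat s nu g
  | FAnd g h => fo_sat s nu g /\ fo_sat s nu h
  | FEx x g => exists n, 1 <= n /\ fo_sat s (fun v => if v == x then n else nu v) g
  end.

Fixpoint fo_free_in (Sig : Type) (P : nat -> bool) (f : fo Sig) : bool :=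
  match f with
  | FLetter _ x => P x
  | FLt x y | FEq x y => P x && P y
  | FNot g => fo_free_in P g
  | FAnd g h => fo_free_in P g && fo_free_in P h
  | FEx x g => fo_free_in (fun v => (v == x) || P v) g
  end.

Definition val2 (i j : nat) : nat -> nat := fun v => if v == 0 then i else j.

(* The relation (q_i, X) ~>_1 (q_j, Y) along s[i+1:j] only depends on the image of s[i+1:j] in
   the transition monoid of T, which records the state map and, for all p, X, Y, whether X
   occurs in the composed update of Y along the run from p; and q_i is read off the image of
   s[1:i].  Aperiodicity of T makes this finite monoid aperiodic, so it suffices to express in
   first-order logic that the product of the monoid labels of the positions in (x, y] is m.
   This is the McNaughton-Papert-Schuetzenberger theorem, proved with Diekert and Gastin's
   local divisors, by induction on the size of the monoid M and of the set C of labels used.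
   Pick c <> 1 in C.  If no position of (x, y] is labelled c, the product is definable by
   induction on C minus c.  Otherwise cut (x, y] at its first and last c: the middle part
   c w_1 c ... w_k c is the product, in the local divisor cM /\ Mc with (a c) o y = a y, of the
   letters c w_l c, each definable from the c-free factor w_l.  Aperiodicity keeps 1 out of
   cM /\ Mc, so this aperiodic monoid is smaller than M. *)

From HB Require Import structures.
From mathcomp Require Import all_boot zify boolp.
Set Implicit Arguments. Unset Strict Implicit. Unset Printing Implicit Defensive.

Inductive form (A : Type) : Type :=
| Lab of A & nat
| Lt of nat & nat
| Eqv of nat & nat
| Not of form A
| And of form A & form A
| Ex of nat & form A.
Arguments Lt {A}. Arguments Eqv {A}.

Definition upd (nu : nat -> nat) (x n : nat) : nat -> nat :=
  fun v => if v == x then n else nu v.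

Lemma upd_eq nu x n : upd nu x n x = n.
Proof. by rewrite /upd eqxx. Qed.

Lemma upd_neq nu x n v : v != x -> upd nu x n v = nu v.
Proof. by rewrite /upd => /negbTE->. Qed.

Section Semantics.
Variables (A : Type) (D : pred nat) (lab : nat -> A).

Fixpoint holds (nu : nat -> nat) (f : form A) : Prop :=
  match f with
  | Lab a x => lab (nu x) = a
  | Lt x y => nu x < nu y
  | Eqv x y => nu x = nu y
  | Not g => ~ holds nu g
  | And g h => holds nu g /\ holds nu h
  | Ex x g => exists2 n, D n & holds (upd nu x n) g
  end.

Lemma holds_Lab nu a x : holds nu (Lab a x) <-> lab (nu x) = a. Proof. by []. Qed.
Lemma holds_Lt nu x y : holds nu (Lt x y) <-> nu x < nu y. Proof. by []. Qed.
Lemma holds_Not nu f : holds nu (Not f) <-> ~ holds nu f. Proof. by []. Qed.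
Lemma holds_And nu f g : holds nu (And f g) <-> holds nu f /\ holds nu g. Proof. by []. Qed.
Lemma holds_Ex nu x f : holds nu (Ex x f) <-> exists2 n, D n & holds (upd nu x n) f.
Proof. by []. Qed.

Definition Tru : form A := Eqv 0 0.
Definition Fls : form A := Not Tru.
Definition Or (f g : form A) : form A := Not (And (Not f) (Not g)).
Definition Le x y : form A := Not (Lt y x).
Definition OrL (fs : seq (form A)) : form A := foldr Or Fls fs.

Lemma holds_Fls nu : ~ holds nu Fls.
Proof. by apply. Qed.

Lemma holds_Or nu f g : holds nu (Or f g) <-> holds nu f \/ holds nu g.
Proof.
split=> [Hfg | [Hf | Hg] [Nf Ng]] //.
by apply: contrapT => N; apply: Hfg; split=> H; apply: N; [left | right].
Qed.

Lemma holds_Le nu x y : holds nu (Le x y) <-> nu x <= nu y.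
Proof. by rewrite /Le /= ltnNge; split=> [/negP/negbNE | ->]. Qed.

Lemma holds_OrL_map (T : eqType) (f : T -> form A) (l : seq T) nu :
  holds nu (OrL (map f l)) <-> exists2 t, t \in l & holds nu (f t).
Proof.
elim: l => [|t l IH]; first by split=> [/holds_Fls|[]].
rewrite map_cons [OrL _]/= holds_Or IH; split=> [[Ht|[u ul Hu]]|[u]].
- by exists t; rewrite ?mem_head.
- by exists u; rewrite // in_cons ul orbT.
by rewrite in_cons => /orP[/eqP-> | ul] Hu; [left | right; exists u].
Qed.

Lemma holds_OrL_fin (T : finType) (P : pred T) (f : T -> form A) nu :
  holds nu (OrL [seq f t | t <- enum T & P t]) <-> exists t, P t /\ holds nu (f t).
Proof.
rewrite holds_OrL_map; split=> [[t] | [t [Pt Ht]]].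
  by rewrite mem_filter => /andP[Pt _]; exists t.
by exists t; rewrite // mem_filter Pt mem_enum.
Qed.

End Semantics.

Arguments Tru {A}. Arguments Fls {A}. Arguments Le {A}.

Fixpoint translate (A B : Type) (guard : nat -> form A) (alpha : B -> nat -> form A)
    (f : form B) : form A :=
  match f with
  | Lab b x => alpha b x
  | Lt x y => Lt x y
  | Eqv x y => Eqv x y
  | Not g => Not (translate guard alpha g)
  | And g h => And (translate guard alpha g) (translate guard alpha h)
  | Ex x g => Ex x (And (guard x) (translate guard alpha g))
  end.

Lemma holds_translate (A B : Type) (guard : nat -> form A) (alpha : B -> nat -> form A)
    (D : pred nat) (lab : nat -> A) (D' : pred nat) (lab' : nat -> B) :
  {subset D' <= D} ->
  (forall nu v, D (nu v) -> holds D lab nu (guard v) <-> D' (nu v)) ->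
  (forall nu b x, holds D lab nu (alpha b x) <-> lab' (nu x) = b) ->
  forall f nu, holds D lab nu (translate guard alpha f) <-> holds D' lab' nu f.
Proof.
move=> subD guardP alphaP; elim=> [b x|x y|x y|g IH|g IHg h IHh|x g IH] nu /=;
  rewrite ?IH ?IHg ?IHh //.
split=> [[n Dn [G Hg]] | [n D'n Hg]].
  have D'n : D' n by rewrite -(upd_eq nu x n); apply/guardP; rewrite ?upd_eq.
  by exists n; rewrite // -IH.
exists n; first exact: subD.
by split; [apply/guardP; rewrite upd_eq //; exact: subD | rewrite IH].
Qed.

Definition iprod (M : Type) (one : M) (mul : M -> M -> M) (D : pred nat) (lab : nat -> M)
    (i j : nat) : M :=
  \big[mul/one]_(i.+1 <= k < j.+1 | D k) lab k.

Section IntervalProduct.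
Variables (M : Type) (one : M) (mul : M -> M -> M).
Hypotheses (mulA : associative mul) (mul1 : left_id one mul) (mulm1 : right_id one mul).
HB.instance Definition _ := Monoid.isLaw.Build M one mul mulA mul1 mulm1.
Implicit Types (D : pred nat) (lab : nat -> M).
Local Notation iprod := (iprod one mul).

Lemma iprod_geq D lab i j : j <= i -> iprod D lab i j = one.
Proof. by move=> ji; rewrite /iprod big_geq. Qed.

Lemma iprod_cat D lab i k j : i <= k -> k <= j ->
  iprod D lab i j = mul (iprod D lab i k) (iprod D lab k j).
Proof. by move=> ik kj; rewrite /iprod (big_cat_nat _ (n := k.+1)). Qed.

Lemma iprodSr D lab i j : i <= j ->
  iprod D lab i j.+1 = if D j.+1 then mul (iprod D lab i j) (lab j.+1) else iprod D lab i j.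
Proof.
move=> ij; rewrite (iprod_cat _ _ ij (leqnSn j)).
have -> : iprod D lab j j.+1 = if D j.+1 then lab j.+1 else one.
  by rewrite /iprod big_mkcond big_nat1.
by case: (D j.+1); rewrite ?mulm1.
Qed.

Lemma eq_iprod D D' lab lab' i j :
  (forall k, i < k <= j -> D k = D' k /\ (D k -> lab k = lab' k)) ->
  iprod D lab i j = iprod D' lab' i j.
Proof.
move=> eqDlab; apply: congr_big_nat => // k; first by case/eqDlab.
by case/andP=> Dk /eqDlab[_]; apply.
Qed.

Lemma iprod1 D lab i j : (forall k, D k -> lab k = one) -> iprod D lab i j = one.
Proof. by move=> lab1; rewrite /iprod big1. Qed.

End IntervalProduct.

Definition mpow (M : Type) (one : M) (mul : M -> M -> M) (x : M) (n : nat) : M :=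
  iter n (mul x) one.

Definition aperiodic_monoid (M : Type) (one : M) (mul : M -> M -> M) : Prop :=
  exists N, forall x, mpow one mul x N = mpow one mul x N.+1.

Definition iprod_definable (M : finType) (one : M) (mul : M -> M -> M) (C : {set M}) : Prop :=
  exists F : nat -> nat -> M -> form M,
    forall x y m (D : pred nat) (lab : nat -> M), (forall k, D k -> lab k \in C) ->
    forall nu, holds D lab nu (F x y m) <-> iprod one mul D lab (nu x) (nu y) = m.

Lemma iprod_definable_ones (M : finType) (one : M) (mul : M -> M -> M) (C : {set M}) :
  associative mul -> left_id one mul -> right_id one mul ->
  (forall c, c \in C -> c = one) -> iprod_definable one mul C.
Proof.
move=> mulA mul1 mulm1 C1.
exists (fun _ _ m => if m == one then Tru else Fls) => x y m D lab labC nu.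
rewrite iprod1 => // [|k /labC/C1 //].
by case: eqP => [<- // | neq]; split=> [/holds_Fls [] | /esym/neq []].
Qed.

Section LocalDivisor.
Variables (M : finType) (one : M) (mul : M -> M -> M).
Hypotheses (mulA : associative mul) (mul1 : left_id one mul) (mulm1 : right_id one mul).
Variable c : M.
Local Notation "x * y" := (mul x y).

Definition ldiv_set : {set M} := [set x | [exists b, x == c * b] && [exists a, x == a * c]].

Definition ldiv := {x : M | x \in ldiv_set}.

Lemma ldiv_setP x : x \in ldiv_set <-> (exists b, x = c * b) /\ (exists a, x = a * c).
Proof.
rewrite inE; split=> [/andP[/existsP[b /eqP->] /existsP[a /eqP Ea]] | [[b ->] [a Ea]]].
  by split; [exists b | exists a].
by apply/andP; split; apply/existsP; [exists b | exists a; rewrite Ea].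
Qed.

Lemma ldiv_set_c : c \in ldiv_set.
Proof. by apply/ldiv_setP; split; [exists one | exists one]; rewrite ?mul1 ?mulm1. Qed.

Definition ld1 : ldiv := exist _ c ldiv_set_c.

Definition lcof (x : M) : M := odflt one [pick a | a * c == x].

Lemma lcofK x : x \in ldiv_set -> lcof x * c = x.
Proof.
case/ldiv_setP=> _ [a ->]; rewrite /lcof.
by case: pickP => [a' /eqP // | /(_ a)]; rewrite eqxx.
Qed.

Lemma ldiv_cM (y : ldiv) : exists b, val y = c * b.
Proof. by case/ldiv_setP: (valP y). Qed.

Lemma ldmul_in (x y : ldiv) : lcof (val x) * val y \in ldiv_set.
Proof.
have /ldiv_setP[[bx Ex] _] := valP x; have /ldiv_setP[[b Eb] [a Ea]] := valP y.
apply/ldiv_setP; split; last by exists (lcof (val x) * a); rewrite Ea mulA.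
by exists (bx * b); rewrite Eb mulA lcofK ?(valP x) // Ex mulA.
Qed.

(* [(a c) o y = a y], independent of the choice of [a] since [y] lies in [c M]. *)
Definition ldmul (x y : ldiv) : ldiv := insubd ld1 (lcof (val x) * val y).

Lemma val_ldmul (x y : ldiv) b : val y = c * b -> val (ldmul x y) = val x * b.
Proof.
by move=> Ey; rewrite val_insubd ldmul_in Ey mulA lcofK // (valP x).
Qed.

Lemma ldmulA : associative ldmul.
Proof.
move=> x y z; apply: val_inj.
have [bz Ez] := ldiv_cM z; have [b Ey] := ldiv_cM y.
have Eyz : val (ldmul y z) = c * (b * bz) by rewrite (val_ldmul y Ez) Ey mulA.
by rewrite (val_ldmul x Eyz) (val_ldmul _ Ez) (val_ldmul x Ey) mulA.
Qed.

Lemma ld1mul : left_id ld1 ldmul.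
Proof. by move=> y; apply: val_inj; have [b E] := ldiv_cM y; rewrite (val_ldmul ld1 E) E. Qed.

Lemma ldmul1 : right_id ld1 ldmul.
Proof. by move=> x; apply: val_inj; rewrite (@val_ldmul x ld1 one) ?mulm1. Qed.

Definition ldblock (w : M) : ldiv := insubd ld1 (c * (w * c)).

Lemma val_ldblock w : val (ldblock w) = c * (w * c).
Proof.
rewrite val_insubd; case: ifPn => // /negP[]; apply/ldiv_setP.
by split; [exists (w * c) | exists (c * w); rewrite mulA].
Qed.

Lemma val_ldmul_block x w : val (ldmul x (ldblock w)) = val x * (w * c).
Proof. exact/val_ldmul/val_ldblock. Qed.

Lemma val_ldpow x n : val (mpow ld1 ldmul x n) = mpow one mul (lcof (val x)) n * c.
Proof.
elim: n => [|n IHn] /=; first by rewrite mul1.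
by rewrite val_insubd ldmul_in -/(mpow _ _ _ _) IHn mulA.
Qed.

Lemma mpowSr x n : mpow one mul x n.+1 = mpow one mul x n * x.
Proof.
elim: n => [|n IHn]; first by rewrite /= mul1 mulm1.
by rewrite -[LHS]/(x * mpow one mul x n.+1) {1}IHn mulA.
Qed.

Hypothesis aperM : aperiodic_monoid one mul.

Lemma ldiv_aperiodic : aperiodic_monoid ld1 ldmul.
Proof. by case: aperM => N aperN; exists N => x; apply: val_inj; rewrite !val_ldpow aperN. Qed.

(* A right inverse [b] of [c] would give [c^n b^n = 1] for all [n], whence
   [c = c^(N+1) b^N = c^N b^N = 1] by aperiodicity. *)
Lemma one_notin_ldiv_set : c != one -> one \notin ldiv_set.
Proof.
move=> c1; apply/negP => /ldiv_setP[[b cb1] _]; case: aperM => N aperN.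
have pow1 n : mpow one mul c n * mpow one mul b n = one.
  elim: n => [|n IHn]; first by rewrite mulm1.
  by rewrite mpowSr [mpow _ _ c _]/= -mulA (mulA _ b) -cb1 mul1.
move: c1; rewrite -(pow1 N) aperN [mpow _ _ c _]/= -mulA pow1 mulm1.
by rewrite eqxx.
Qed.

Lemma card_ldiv : c != one -> #|{: ldiv}| < #|M|.
Proof.
move=> c1; rewrite card_sig (eq_card (B := ldiv_set)) // -cardsT.
by apply: proper_card; rewrite properT; apply: contraNneq (one_notin_ldiv_set c1) => ->.
Qed.

End LocalDivisor.

Section Factorization.
Variables (M : finType) (one : M) (mul : M -> M -> M).
Hypotheses (mulA : associative mul) (mul1 : left_id one mul) (mulm1 : right_id one mul).
Variable c : M.
Local Notation "x * y" := (mul x y).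
Local Notation ldiv := (ldiv mul c).
Local Notation ld1 := (ld1 mul1 mulm1 c).
Local Notation ldmul := (ldmul mul1 mulm1 (c:=c)).
Local Notation ldblock := (ldblock mul1 mulm1 c).
Let ldmulA := @ldmulA M one mul mulA mul1 mulm1 c.
Let ld1mul := @ld1mul M one mul mulA mul1 mulm1 c.
Let ldmul1 := @ldmul1 M one mul mulA mul1 mulm1 c.

Variables (C : {set M}) (FB : nat -> nat -> M -> form M) (FC : nat -> nat -> ldiv -> form ldiv).
Hypothesis FBP : forall x y m (D : pred nat) (lab : nat -> M),
  (forall k, D k -> lab k \in C :\ c) ->
  forall nu, holds D lab nu (FB x y m) <-> iprod one mul D lab (nu x) (nu y) = m.
Hypothesis FCP : forall x y e (D : pred nat) (lab : nat -> ldiv) nu,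
  holds D lab nu (FC x y e) <-> iprod ld1 ldmul D lab (nu x) (nu y) = e.

Definition is_c (v : nat) : form M := Lab c v.

Definition avoid_c (f : form M) : form M := translate (fun v => Not (is_c v)) (@Lab M) f.

(* Bound variables are taken above the free ones, so that no quantifier captures them. *)
Definition no_c_between (x y : nat) : form M :=
  let w := (maxn x y).+1 in Not (Ex w (And (Lt x w) (And (Lt w y) (is_c w)))).

Definition no_c_upto (x y : nat) : form M :=
  let w := (maxn x y).+1 in Not (Ex w (And (Lt x w) (And (Le w y) (is_c w)))).

Definition no_c_before (x : nat) : form M := Not (Ex x.+1 (And (Lt x.+1 x) (is_c x.+1))).

Definition block_after_c (b : ldiv) (x : nat) : form M :=
  let z := x.+1 in
  Ex z (And (Lt z x) (And (is_c z) (And (no_c_between z x)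
    (OrL [seq avoid_c (FB z x w) | w <- enum M & ldblock w == b])))).

Definition block_label (b : ldiv) (x : nat) : form M :=
  Or (block_after_c b x) (And (no_c_before x) (if b == ld1 then Tru else Fls)).

Definition via_ldiv (f : form ldiv) : form M := translate is_c block_label f.

Definition first_c (x y p : nat) : form M :=
  And (Lt x p) (And (Le p y) (And (is_c p) (no_c_between x p))).

Definition last_c (x y q : nat) : form M :=
  And (Lt x q) (And (Le q y) (And (is_c q) (no_c_upto q y))).

Definition split_prod (x y p q : nat) (m : M) : form M :=
  OrL [seq And (avoid_c (FB x p t.1.1)) (And (via_ldiv (FC p q t.1.2)) (avoid_c (FB q y t.2)))
      | t <- enum {: M * ldiv * M} & t.1.1 * val t.1.2 * t.2 == m].

Definition c_factorization (x y : nat) (m : M) : form M :=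
  let p := (maxn x y).+1 in let q := p.+1 in
  Ex p (Ex q (And (first_c x y p) (And (last_c x y q) (split_prod x y p q m)))).

Definition iprod_form (x y : nat) (m : M) : form M :=
  Or (And (no_c_upto x y) (avoid_c (FB x y m))) (c_factorization x y m).

Section Structure.
Variables (D : pred nat) (lab : nat -> M).
Hypothesis labC : forall k, D k -> lab k \in C.

Definition Dc k := D k && (lab k == c).
Definition Dnc k := D k && (lab k != c).
Local Notation prodS := (iprod one mul D lab).
Local Notation prodNC := (iprod one mul Dnc lab).

Fixpoint last_c_before (n : nat) : option nat :=
  if n is n'.+1 then if Dc n' then Some n' else last_c_before n' else None.

Definition block (p : nat) : ldiv :=
  if last_c_before p is Some z then ldblock (prodNC z p) else ld1.

Local Notation prodC := (iprod ld1 ldmul Dc block).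

Definition is_first_c i j p := [/\ i < p <= j, Dc p & forall w, i < w < p -> ~~ Dc w].
Definition is_last_c i j q := [/\ i < q <= j, Dc q & forall w, q < w <= j -> ~~ Dc w].

Lemma holds_avoid_c nu f : holds D lab nu (avoid_c f) <-> holds Dnc lab nu f.
Proof.
apply: holds_translate => // [n /andP[] // | nu' v Dv].
by rewrite /Dnc Dv /=; split=> [/eqP | /eqP].
Qed.

Lemma holds_FB x y m nu : holds D lab nu (avoid_c (FB x y m)) <-> prodNC (nu x) (nu y) = m.
Proof.
by rewrite holds_avoid_c; apply: FBP => k /andP[Dk ck]; rewrite in_setD1 ck labC.
Qed.

Lemma holds_no_c_between nu x y :
  holds D lab nu (no_c_between x y) <-> forall w, nu x < w < nu y -> ~~ Dc w.
Proof.
rewrite /no_c_between holds_Not; set v := (maxn x y).+1.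
have [xv yv] : x != v /\ y != v by split; apply/eqP; lia.
split=> [N w /andP[xw wy] | N /holds_Ex[w Dw]].
  apply/negP => /andP[Dw /eqP cw]; apply: N; apply/holds_Ex; exists w => //.
  by rewrite !holds_And !holds_Lt holds_Lab upd_eq !upd_neq.
rewrite !holds_And !holds_Lt holds_Lab upd_eq !upd_neq // => -[xw [wy cw]].
by move: (N w); rewrite xw wy /Dc Dw cw eqxx => /(_ isT).
Qed.

Lemma holds_no_c_upto nu x y :
  holds D lab nu (no_c_upto x y) <-> forall w, nu x < w <= nu y -> ~~ Dc w.
Proof.
rewrite /no_c_upto holds_Not; set v := (maxn x y).+1.
have [xv yv] : x != v /\ y != v by split; apply/eqP; lia.
split=> [N w /andP[xw wy] | N /holds_Ex[w Dw]].
  apply/negP => /andP[Dw /eqP cw]; apply: N; apply/holds_Ex; exists w => //.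
  by rewrite !holds_And holds_Lt holds_Le holds_Lab upd_eq !upd_neq.
rewrite !holds_And holds_Lt holds_Le holds_Lab upd_eq !upd_neq // => -[xw [wy cw]].
by move: (N w); rewrite xw wy /Dc Dw cw eqxx => /(_ isT).
Qed.

Lemma holds_no_c_before nu x :
  holds D lab nu (no_c_before x) <-> forall w, w < nu x -> ~~ Dc w.
Proof.
have xS : x != x.+1 by rewrite neq_ltn ltnSn.
rewrite holds_Not; split=> [N w wx | N /holds_Ex[w Dw]].
  apply/negP => /andP[Dw /eqP cw]; apply: N; apply/holds_Ex; exists w => //.
  by rewrite holds_And holds_Lt holds_Lab upd_eq upd_neq.
rewrite holds_And holds_Lt holds_Lab upd_eq upd_neq // => -[wx cw].
by move: (N w wx); rewrite /Dc Dw cw eqxx.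
Qed.

Lemma last_c_beforeP n z :
  last_c_before n = Some z <-> [/\ z < n, Dc z & forall w, z < w < n -> ~~ Dc w].
Proof.
elim: n => [|n IHn] /=; first by split=> // -[].
case: ifP => Dn.
  split=> [[<-] | [zn Dz noc]]; first by split=> // w; lia.
  case: (ltngtP z n) => [zn' | | -> //]; last lia.
  by move: (noc n); rewrite zn' ltnSn Dn => /(_ isT).
rewrite IHn; split=> -[zn Dz noc].
  split=> [|//|w /andP[zw]]; first lia.
  by rewrite ltnS leq_eqVlt => /orP[/eqP-> | wn]; [rewrite Dn | apply/noc/andP].
have zn' : z != n by apply: contraTneq Dz => ->; rewrite Dn.
by split=> // [|w /andP[zw wn]]; [lia | apply/noc/andP; split=> //; lia].
Qed.

Lemma holds_block_after_c nu b x :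
  holds D lab nu (block_after_c b x) <->
  exists2 z, last_c_before (nu x) = Some z & ldblock (prodNC z (nu x)) = b.
Proof.
have xS : x != x.+1 by rewrite neq_ltn ltnSn.
split=> [/holds_Ex[z Dz] | [z /last_c_beforeP[zx /andP[Dz /eqP cz] noc] <-]].
  rewrite !holds_And holds_Lt holds_Lab holds_no_c_between holds_OrL_fin upd_eq upd_neq //.
  move=> [zx [cz [noc [w [/eqP <-]]]]]; rewrite holds_FB upd_eq upd_neq // => <-.
  by exists z => //; apply/last_c_beforeP; split; rewrite // /Dc Dz cz eqxx.
apply/holds_Ex; exists z => //.
rewrite !holds_And holds_Lt holds_Lab holds_no_c_between holds_OrL_fin.
rewrite upd_eq upd_neq //; do !split => //.
by exists (prodNC z (nu x)); rewrite holds_FB upd_eq upd_neq.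
Qed.

Lemma last_c_before_None n : last_c_before n = None -> forall w, w < n -> ~~ Dc w.
Proof.
elim: n => [|n IHn] //=; case: ifP => // Dn /IHn noc w.
by rewrite ltnS leq_eqVlt => /orP[/eqP-> | /noc]; rewrite ?Dn.
Qed.

Lemma holds_block_label nu b x : holds D lab nu (block_label b x) <-> block (nu x) = b.
Proof.
rewrite holds_Or holds_block_after_c holds_And holds_no_c_before /block.
case E: (last_c_before (nu x)) => [z|].
  split=> [[[z' [<-] ->] // | [noc _]] | <-]; last by left; exists z.
  by case/last_c_beforeP: E => /noc/negP.
split=> [[[z' //] | [_]] | <-]; first by case: eqP => [-> // | _ /holds_Fls].
by right; split; [exact: last_c_before_None | rewrite eqxx].
Qed.

Lemma holds_via_ldiv nu f : holds D lab nu (via_ldiv f) <-> holds Dc block nu f.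
Proof.
apply: holds_translate => [n /andP[] // | nu' v Dv | nu' b x]; last exact: holds_block_label.
by rewrite holds_Lab /Dc Dv; split=> [-> | /eqP]; rewrite ?eqxx.
Qed.

Lemma holds_FC p q e nu : holds D lab nu (via_ldiv (FC p q e)) <-> prodC (nu p) (nu q) = e.
Proof. by rewrite holds_via_ldiv FCP. Qed.

Lemma holds_first_c nu x y p : D (nu p) ->
  holds D lab nu (first_c x y p) <-> is_first_c (nu x) (nu y) (nu p).
Proof.
move=> Dp; rewrite !holds_And holds_Lt holds_Le holds_Lab holds_no_c_between /is_first_c /Dc Dp.
by split=> [[-> [-> [/eqP -> ?]]] | [/andP[-> ->] /eqP -> ?]].
Qed.

Lemma holds_last_c nu x y q : D (nu q) ->
  holds D lab nu (last_c x y q) <-> is_last_c (nu x) (nu y) (nu q).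
Proof.
move=> Dq; rewrite !holds_And holds_Lt holds_Le holds_Lab holds_no_c_upto /is_last_c /Dc Dq.
by split=> [[-> [-> [/eqP -> ?]]] | [/andP[-> ->] /eqP -> ?]].
Qed.

Lemma holds_split_prod nu x y p q m :
  holds D lab nu (split_prod x y p q m) <->
  prodNC (nu x) (nu p) * val (prodC (nu p) (nu q)) * prodNC (nu q) (nu y) = m.
Proof.
rewrite holds_OrL_fin; split=> [[[[a e] b] [/eqP <-]] | <-].
  by rewrite !holds_And !holds_FB holds_FC => -[-> [-> ->]].
exists (prodNC (nu x) (nu p), prodC (nu p) (nu q), prodNC (nu q) (nu y)).
by rewrite !holds_And !holds_FB holds_FC.
Qed.

(* The blocks up to [j] account for all of [c * prodS p j] but its c-free tail. *)
Lemma prodC_tail p k : Dc p ->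
  exists2 z, last_c_before (p + k).+1 = Some z &
    c * prodS p (p + k) = val (prodC p (p + k)) * prodNC z (p + k).
Proof.
move=> Dp; elim: k => [|k [z Ez IHk]].
  by exists p; rewrite addn0 /= ?Dp // !iprod_geq // mulm1.
rewrite addnS; set j := p + k in Ez IHk *.
have pj : p <= j by rewrite leq_addr.
have prodNCS : prodNC z j.+1 = if Dnc j.+1 then prodNC z j * lab j.+1 else prodNC z j.
  by apply: (iprodSr mulA mul1 mulm1); case/last_c_beforeP: Ez.
rewrite -[last_c_before _]/(if Dc j.+1 then Some j.+1 else last_c_before j.+1) Ez.
rewrite (iprodSr mulA mul1 mulm1 _ _ pj) (iprodSr ldmulA ld1mul ldmul1 _ _ pj).
rewrite -[Dc j.+1]/(D j.+1 && (lab j.+1 == c)).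
move: prodNCS; rewrite -[Dnc j.+1]/(D j.+1 && (lab j.+1 != c)).
case: (D j.+1) => /= prodNCS; last by exists z; rewrite // prodNCS.
case: eqP prodNCS => cj /= prodNCS; last by exists z; rewrite // prodNCS !mulA IHk.
have blk : block j.+1 = ldblock (prodNC z j) by rewrite /block Ez prodNCS.
exists j.+1 => //; rewrite [X in _ = _ * X]iprod_geq // mulm1 blk cj.
by rewrite (val_ldmul_block mulA) !mulA -IHk.
Qed.

Lemma val_prodC p q : Dc p -> Dc q -> p <= q -> val (prodC p q) = c * prodS p q.
Proof.
move=> Dp Dq /subnKC pq; have [z] := prodC_tail (q - p) Dp; rewrite pq /= Dq => -[<-] ->.
by rewrite [X in _ * X]iprod_geq // mulm1.
Qed.

Lemma prodS_no_c i j : (forall k, i < k <= j -> ~~ Dc k) -> prodS i j = prodNC i j.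
Proof.
by move=> noc; apply: eq_iprod => k /noc; rewrite /Dc /Dnc; case: (D k) => //= ->.
Qed.

Lemma prodS_factor i j p q : is_first_c i j p -> is_last_c i j q ->
  prodS i j = prodNC i p * val (prodC p q) * prodNC q j.
Proof.
move=> [/andP[ip pj] Dp nocl] [/andP[iq qj] Dq nocr].
have pq : p <= q by rewrite leqNgt; apply/negP => qp; move: (nocr p); rewrite qp pj Dp => /(_ isT).
rewrite (iprod_cat mulA mul1 mulm1 _ _ (ltnW ip) (leq_trans pq qj)).
rewrite (iprod_cat mulA mul1 mulm1 _ _ pq qj) (val_prodC Dp Dq pq).
rewrite (prodS_no_c (i := q)) // mulA; congr (_ * _).
case: p ip pj pq Dp nocl => // p ip _ pq Dp nocl; rewrite ltnS in ip.
have /andP[Dp' /eqP cp] := Dp.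
by rewrite !(iprodSr mulA mul1 mulm1 _ _ ip) /Dnc Dp' cp eqxx /= prodS_no_c ?mulA.
Qed.

Lemma first_last_c i j k : i < k <= j -> Dc k ->
  exists p q, is_first_c i j p /\ is_last_c i j q.
Proof.
move=> /andP[ik kj] Dk; have exc : exists k, [&& i < k, k <= j & Dc k] by exists k; apply/and3P.
have [p /and3P[ip pj Dp] minp] := ex_minnP exc.
have ubj w : [&& i < w, w <= j & Dc w] -> w <= j by case/and3P.
have [q /and3P[iq qj Dq] maxq] := ex_maxnP exc ubj.
exists p, q; split; split=> [|//|w /andP[iw wq]]; rewrite ?ip ?iq //; apply/negP => Dw.
  by have := minp w; rewrite iw Dw (leq_trans (ltnW wq) pj) => /(_ isT); rewrite leqNgt wq.
by have := maxq w; rewrite (ltn_trans iq iw) wq Dw => /(_ isT); rewrite leqNgt iw.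
Qed.

Lemma holds_c_factorization nu x y m :
  holds D lab nu (c_factorization x y m) <->
  exists p q, [/\ is_first_c (nu x) (nu y) p, is_last_c (nu x) (nu y) q &
    prodNC (nu x) p * val (prodC p q) * prodNC q (nu y) = m].
Proof.
rewrite /c_factorization; set p := (maxn x y).+1; set q := p.+1.
have nu2E n1 n2 : [/\ upd (upd nu p n1) q n2 x = nu x, upd (upd nu p n1) q n2 y = nu y,
    upd (upd nu p n1) q n2 p = n1 & upd (upd nu p n1) q n2 q = n2].
  have [xp yp xq yq pq] : [/\ x != p, y != p, x != q, y != q & p != q].
    by split; apply/eqP; lia.
  by split; [rewrite !upd_neq | rewrite !upd_neq | rewrite upd_neq // upd_eq | rewrite upd_eq].
split=> [/holds_Ex[n1 D1 /holds_Ex[n2 D2 /holds_And[F /holds_And[L S]]]] | [n1 [n2 [F L E]]]].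
  have [ex ey ep eq] := nu2E n1 n2; rewrite -ep in D1; rewrite -eq in D2.
  move: F L S; rewrite holds_first_c // holds_last_c // holds_split_prod ex ey ep eq.
  by exists n1, n2.
have [ex ey ep eq] := nu2E n1 n2.
have D1 : D (upd (upd nu p n1) q n2 p) by rewrite ep; case: F => _ /andP[].
have D2 : D (upd (upd nu p n1) q n2 q) by rewrite eq; case: L => _ /andP[].
apply/holds_Ex; exists n1; first by rewrite -ep.
apply/holds_Ex; exists n2; first by rewrite -eq.
apply/holds_And; split; first by rewrite holds_first_c // ex ey ep.
by apply/holds_And; rewrite holds_last_c // holds_split_prod ex ey ep eq.
Qed.

Lemma holds_iprod_form nu x y m :
  holds D lab nu (iprod_form x y m) <-> prodS (nu x) (nu y) = m.
Proof.
rewrite holds_Or holds_And holds_no_c_upto holds_FB holds_c_factorization.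
have [[k [xky Dk]] | noc] := pselect (exists k, nu x < k <= nu y /\ Dc k).
  split=> [[[noc _] | [p [q [F L <-]]]] | E]; first by move: (noc k xky); rewrite Dk.
    exact: prodS_factor.
  by have [p [q [F L]]] := first_last_c xky Dk; right; exists p, q; rewrite -E (prodS_factor F L).
have nocE w : nu x < w <= nu y -> ~~ Dc w by move=> xwy; apply/negP => Dw; apply: noc; exists w.
rewrite prodS_no_c //; split=> [[[_ ->] // | [p [q [[/andP[xp py] Dp _] _ _]]]] | <-].
  by case: noc; exists p; rewrite xp py.
by left.
Qed.

End Structure.

Lemma iprod_definable_factor : iprod_definable one mul C.
Proof. by exists iprod_form => x y m D lab labC nu; apply: holds_iprod_form. Qed.

End Factorization.

Theorem aperiodic_iprod_definable (M : finType) (one : M) (mul : M -> M -> M) :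
  associative mul -> left_id one mul -> right_id one mul -> aperiodic_monoid one mul ->
  forall C : {set M}, iprod_definable one mul C.
Proof.
have [n] := ubnP #|M|; elim: n M one mul => // n IHn M one mul cardM mulA mul1 mulm1 aperM C.
have [k] := ubnP #|C|; elim: k C => // k IHk C cardC.
case: (pickP [pred c in C | c != one]) => [c /andP[Cc c1] | C1]; last first.
  by apply: iprod_definable_ones => // c Cc; move: (C1 c); rewrite /= Cc => /negbFE/eqP.
have [FB FBP] : iprod_definable one mul (C :\ c).
  by apply: IHk; rewrite (cardsD1 c C) Cc in cardC.
have [FC FCP] : iprod_definable (ld1 mul1 mulm1 c) (ldmul mul1 mulm1 (c:=c)) [set: _].
  apply: IHn; first exact: leq_trans (card_ldiv mulA mul1 mulm1 aperM c1) _.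
  - exact: ldmulA.
  - exact: ld1mul.
  - exact: ldmul1.
  - exact: ldiv_aperiodic.
apply: (@iprod_definable_factor _ _ _ mulA mul1 mulm1 c C FB FC FBP) => x y e D lab nu.
by apply: FCP => ? _; rewrite inE.
Qed.

Section Substitutions.
Variables (Sig Gam : finType) (T : sst Sig Gam).
Local Notation V := (var T).
Implicit Types (s t : V -> seq (Gam + V)) (w : seq (Gam + V)).

Lemma subst_apply_cons s z w :
  subst_apply s (z :: w) = (if z is inr Z then s Z else [:: z]) ++ subst_apply s w.
Proof. by case: z. Qed.

Lemma subst_apply_cat s w1 w2 :
  subst_apply s (w1 ++ w2) = subst_apply s w1 ++ subst_apply s w2.
Proof. by rewrite /subst_apply map_cat flatten_cat. Qed.

Lemma subst_apply_id w : subst_apply (fun Y => [:: inr Y]) w = w.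
Proof. by elim: w => [|[g|Z] w IHw] //; rewrite subst_apply_cons IHw. Qed.

Lemma eq_subst_apply s t w : s =1 t -> subst_apply s w = subst_apply t w.
Proof. by move=> st; rewrite /subst_apply; congr flatten; apply: eq_map => -[]. Qed.

Lemma subst_apply_comp s t w :
  subst_apply s (subst_apply t w) = subst_apply (fun Z => subst_apply s (t Z)) w.
Proof.
by elim: w => [|[g|Z] w IHw] //; rewrite !subst_apply_cons ?subst_apply_cat IHw.
Qed.

Lemma mem_subst_apply s w (X : V) :
  (inr X \in subst_apply s w) = [exists Z, (inr Z \in w) && (inr X \in s Z)].
Proof.
elim: w => [|z w IHw]; first by apply/idP/existsP => [// | [Z /andP[]]].
rewrite subst_apply_cons mem_cat IHw; apply/orP/existsP => [[] | [Z]].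
- by case: z => [g | Z]; [rewrite inE | exists Z; rewrite mem_head].
- by case/existsP=> Z /andP[Zw XZ]; exists Z; rewrite in_cons Zw orbT.
rewrite in_cons => /andP[/orP[/eqP<- | Zw] XZ]; first by left.
by right; apply/existsP; exists Z; rewrite Zw.
Qed.

Lemma upd_comp_subst p u s Y : upd_comp p u s Y = subst_apply s (sigma_run T p u Y).
Proof.
elim: u p s Y => [|a u IHu] p s Y; first by rewrite /sigma_run /= subst_apply_cons cats0.
rewrite /sigma_run /= !IHu subst_apply_comp; apply: eq_subst_apply => Z.
by rewrite subst_apply_id.
Qed.

Lemma dest_cat p u v : dest T p (u ++ v) = dest T (dest T p u) v.
Proof. exact: foldl_cat. Qed.

Lemma sigma_run_cons p a u Y :
  sigma_run T p (a :: u) Y = subst_apply (rho T p a) (sigma_run T (delta T p a) u Y).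
Proof.
rewrite /sigma_run /= upd_comp_subst; apply: eq_subst_apply => Z.
exact: subst_apply_id.
Qed.

Lemma sigma_run_cat p u v Y :
  sigma_run T p (u ++ v) Y = subst_apply (sigma_run T p u) (sigma_run T (dest T p u) v Y).
Proof.
elim: u p Y => [|a u IHu] p Y; first by rewrite -[LHS]subst_apply_id.
rewrite cat_cons !sigma_run_cons IHu subst_apply_comp.
by apply: eq_subst_apply => Z; rewrite sigma_run_cons.
Qed.

End Substitutions.

Section TransitionMonoid.
Variables (Sig Gam : finType) (T : sst Sig Gam).
Local Notation Q := (state T).
Local Notation V := (var T).

(* Booleans suffice in the second component: in a 1-bounded transducer a variable occurs at
   most once in the composed update. *)
Definition tmon := ({ffun Q -> Q} * {ffun Q * V * V -> bool})%type.

Definition tmul (a b : tmon) : tmon :=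
  ([ffun p => b.1 (a.1 p)],
   [ffun t : Q * V * V => [exists Z, a.2 (t.1.1, t.1.2, Z) && b.2 (a.1 t.1.1, Z, t.2)]]).

Definition tone : tmon := ([ffun p => p], [ffun t : Q * V * V => t.1.2 == t.2]).

Definition tword (u : seq Sig) : tmon :=
  ([ffun p => dest T p u], [ffun t : Q * V * V => inr t.1.2 \in sigma_run T t.1.1 u t.2]).

Lemma tword_nil : tword [::] = tone.
Proof. by congr pair; apply/ffunP => -[[p X] Y]; rewrite !ffunE inE. Qed.

Lemma tword_cat u v : tword (u ++ v) = tmul (tword u) (tword v).
Proof.
congr pair; apply/ffunP; first by move=> p; rewrite !ffunE dest_cat.
move=> [[p X] Y]; rewrite !ffunE /= sigma_run_cat mem_subst_apply; apply: eq_existsb => Z.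
by rewrite !ffunE andbC.
Qed.

Lemma tmulA : associative tmul.
Proof.
move=> a b c; congr pair; apply/ffunP; first by move=> p; rewrite !ffunE.
move=> [[p X] Y]; rewrite !ffunE /=.
apply/existsP/existsP => [[Z /andP[aZ]] | [W /andP[]]]; rewrite ?ffunE /=.
  case/existsP=> W /andP[bW cW]; exists W; rewrite ?ffunE /= cW andbT.
  by apply/existsP; exists Z; rewrite aZ.
case/existsP=> Z /andP[aZ bW] cW; exists Z; rewrite aZ ?ffunE /=.
by apply/existsP; exists W; rewrite bW.
Qed.

Lemma tmul1 : left_id tone tmul.
Proof.
move=> [f g]; congr pair; apply/ffunP; first by move=> p; rewrite !ffunE.
move=> [[p X] Y]; rewrite !ffunE /=.
apply/existsP/idP => [[Z] | gXY]; last by exists X; rewrite !ffunE eqxx.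
by rewrite !ffunE /= => /andP[/eqP->].
Qed.

Lemma tmulm1 : right_id tone tmul.
Proof.
move=> [f g]; congr pair; apply/ffunP; first by move=> p; rewrite !ffunE.
move=> [[p X] Y]; rewrite !ffunE /=.
apply/existsP/idP => [[Z] | gXY]; last by exists Y; rewrite !ffunE gXY eqxx.
by rewrite !ffunE /= => /andP[gXZ /eqP<-].
Qed.

Definition tword_set : {set tmon} := [set x | `[< exists u, tword u = x >]].

Lemma tword_setP x : reflect (exists u, tword u = x) (x \in tword_set).
Proof. by rewrite inE; apply: asboolP. Qed.

Lemma tword_in u : tword u \in tword_set.
Proof. by apply/tword_setP; exists u. Qed.

Lemma tmul_in x y : x \in tword_set -> y \in tword_set -> tmul x y \in tword_set.
Proof. by move=> /tword_setP[u <-] /tword_setP[v <-]; rewrite -tword_cat tword_in. Qed.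

Lemma tone_in : tone \in tword_set.
Proof. by rewrite -tword_nil tword_in. Qed.

Definition word_tmon := {x : tmon | x \in tword_set}.

Definition wone : word_tmon := exist _ tone tone_in.

Definition wmul (x y : word_tmon) : word_tmon :=
  exist _ (tmul (val x) (val y)) (tmul_in (valP x) (valP y)).

Definition wletter (a : Sig) : word_tmon := exist _ (tword [:: a]) (tword_in _).

Lemma wmulA : associative wmul.
Proof. by move=> x y z; apply: val_inj; rewrite /= tmulA. Qed.

Lemma wmul1 : left_id wone wmul.
Proof. by move=> x; apply: val_inj; rewrite /= tmul1. Qed.

Lemma wmulm1 : right_id wone wmul.
Proof. by move=> x; apply: val_inj; rewrite /= tmulm1. Qed.

Lemma val_wpow (x : word_tmon) u n : val x = tword u -> val (mpow wone wmul x n) = tword (upow u n).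
Proof.
move=> xu; elim: n => [|n IHn]; first by rewrite /= tword_nil.
by rewrite [mpow _ _ _ _]/= -/(mpow _ _ _ _) /= IHn xu -tword_cat.
Qed.

Lemma word_tmon_aperiodic (X0 : V) : aperiodic T -> aperiodic_monoid wone wmul.
Proof.
case=> m [_ aperm]; exists m => x; apply: val_inj.
have [u xu] := tword_setP _ (valP x); rewrite !(val_wpow _ (esym xu)).
set w1 := upow u m; set w2 := upow u m.+1.
have dest12 p : dest T p w2 = dest T p w1.
  by have := aperm u p X0 (dest T p w1) X0; rewrite /trans_mx eqxx; case: eqP.
congr pair; apply/ffunP; first by move=> p; rewrite !ffunE dest12.
move=> [[p X] Y]; rewrite !ffunE /= -!has_pred1 !has_count.
have := aperm u p X (dest T p w1) Y; rewrite /trans_mx eqxx -/w1 -/w2 dest12 eqxx.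
by case=> ->.
Qed.

End TransitionMonoid.

Section FirstOrderTranslation.
Variable Sig : finType.

Fixpoint fo_of_form (f : form Sig) : fo Sig :=
  match f with
  | Lab a x => FLetter a x
  | Lt x y => FLt Sig x y
  | Eqv x y => FEq Sig x y
  | Not g => FNot (fo_of_form g)
  | And g h => FAnd (fo_of_form g) (fo_of_form h)
  | Ex x g => FEx x (fo_of_form g)
  end.

Lemma fo_sat_of_form (s : nat -> Sig) nu f :
  fo_sat s nu (fo_of_form f) <-> holds (fun k => 0 < k) (fun k => s k.-1) nu f.
Proof.
elim: f nu => [a x|x y|x y|g IHg|g IHg h IHh|x g IHg] nu //=.
- by rewrite IHg.
- by rewrite IHg IHh.
split=> [[n [n1 /IHg sat_g]] | [n n1 /IHg sat_g]]; first by exists n.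
by exists n; split.
Qed.

Definition letters_form (A : finType) (letter : Sig -> A) (f : form A) : form Sig :=
  translate (fun _ => Tru) (fun a x => OrL [seq Lab b x | b <- enum Sig & letter b == a]) f.

Lemma holds_letters_form (A : finType) (letter : Sig -> A) D (s : nat -> Sig) nu f :
  holds D s nu (letters_form letter f) <-> holds D (fun k => letter (s k)) nu f.
Proof.
apply: holds_translate => // nu' a x.
rewrite holds_OrL_fin; split=> [[b [/eqP <- ->]] // | <-].
by exists (s (nu' x)); rewrite eqxx.
Qed.

Fixpoint fo_vbound (f : fo Sig) : nat :=
  match f with
  | FLetter _ x => x.+1
  | FLt x y | FEq x y => maxn x.+1 y.+1
  | FNot g => fo_vbound g
  | FAnd g h => maxn (fo_vbound g) (fo_vbound h)
  | FEx x g => maxn x.+1 (fo_vbound g)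
  end.

Lemma sub_fo_free_in (P R : pred nat) (f : fo Sig) :
  (forall v, P v -> R v) -> fo_free_in P f -> fo_free_in R f.
Proof.
elim: f P R => [a x|x y|x y|g IHg|g IHg h IHh|x g IHg] P R PR //=.
- exact: PR.
- by case/andP=> /PR-> /PR->.
- by case/andP=> /PR-> /PR->.
- exact: IHg.
- by case/andP=> /(IHg _ _ PR)-> /(IHh _ _ PR)->.
by apply: IHg => v /orP[-> // | /PR->]; rewrite orbT.
Qed.

Lemma fo_free_in_vbound (P : pred nat) (f : fo Sig) :
  (forall v, v < fo_vbound f -> P v) -> fo_free_in P f.
Proof.
elim: f P => [a x|x y|x y|g IHg|g IHg h IHh|x g IHg] P Pb /=; rewrite ?Pb ?leq_max ?ltnSn ?orbT //.
- exact: IHg.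
- by rewrite IHg ?IHh // => v vb; apply: Pb; rewrite leq_max vb ?orbT.
by apply: IHg => v vb; rewrite Pb ?orbT // leq_max vb orbT.
Qed.

(* Instead of tracking free variables through the construction, all variables but 0 and 1 are
   bound to position 1, which does not change a formula whose meaning depends only on 0 and 1. *)
Definition fo_close (vs : seq nat) (f : fo Sig) : fo Sig :=
  foldr (fun v g => FEx v (FAnd (FEq Sig v 1) g)) f vs.

Lemma fo_close_free_in (P : pred nat) vs (f : fo Sig) :
  P 1 -> fo_free_in (fun v => (v \in vs) || P v) f -> fo_free_in P (fo_close vs f).
Proof.
elim: vs P f => [|v vs IHvs] P f P1 /= free_f; first exact: sub_fo_free_in free_f.
rewrite eqxx P1 orbT /=; apply: IHvs; first by rewrite P1 orbT.
by apply: sub_fo_free_in free_f => u; rewrite in_cons; case: (u == v); case: (u \in vs).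
Qed.

Lemma fo_sat_close (s : nat -> Sig) vs f (R : nat -> nat -> Prop) :
  all (fun v => 1 < v) vs ->
  (forall nu, 0 < nu 0 -> 0 < nu 1 -> fo_sat s nu f <-> R (nu 0) (nu 1)) ->
  forall nu, 0 < nu 0 -> 0 < nu 1 -> fo_sat s nu (fo_close vs f) <-> R (nu 0) (nu 1).
Proof.
move=> + sat_f; elim: vs => [_ | v vs IHvs /= /andP[v1 vs1]] nu nu0 nu1; first exact: sat_f.
have [v0' v1'] : (0 == v) = false /\ (1 == v) = false by split; apply/eqP; lia.
have IHn n : fo_sat s (fun u => if u == v then n else nu u) (fo_close vs f) <-> R (nu 0) (nu 1).
  by have := IHvs vs1 (fun u => if u == v then n else nu u); rewrite v0' v1'; apply.
split=> [[n [_ [_ /IHn]]] // | R01].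
by exists (nu 1); split=> //; split; [rewrite /= eqxx v1' | apply/IHn].
Qed.

End FirstOrderTranslation.

Section Flow.
Variables (Sig Gam : finType) (T : sst Sig Gam).
Local Notation W := (word_tmon T).
Local Notation wmul := (@wmul Sig Gam T).
Local Notation wone := (wone T).
Let wmulA := @wmulA _ _ T.
Let wmul1 := @wmul1 _ _ T.
Let wmulm1 := @wmulm1 _ _ T.

Definition word_lab (s : nat -> Sig) (k : nat) : W := wletter T (s k.-1).

Local Notation wprod s := (iprod wone wmul (fun k => 0 < k) (word_lab s)).

Lemma factorSr (s : nat -> Sig) i j : i <= j -> factor s i j.+1 = rcons (factor s i j) (s j).
Proof. by move=> ij; rewrite /factor subSn // -addn1 iotaD map_cat subnKC // cats1. Qed.

Lemma val_wprod s i j : i <= j -> val (wprod s i j) = tword T (factor s i j).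
Proof.
elim: j => [|j IHj] ij; first by rewrite leqn0 in ij; rewrite (eqP ij) iprod_geq // tword_nil.
case: (leqP i j) => [ij' | ji]; last first.
  by rewrite (_ : i = j.+1) ?iprod_geq /factor ?subnn ?tword_nil //; apply/eqP; rewrite eqn_leq ij.
by rewrite (iprodSr wmulA wmul1 wmulm1) //= IHj // factorSr // -cats1 tword_cat.
Qed.

Lemma run_dest (s : nat -> Sig) i j : i <= j -> run T s j = dest T (run T s i) (factor s i j).
Proof.
elim: j => [|j IHj] ij; first by rewrite leqn0 in ij; rewrite (eqP ij).
case: (leqP i j) => [ij' | ji]; last first.
  by rewrite (_ : i = j.+1) /factor ?subnn //; apply/eqP; rewrite eqn_leq ij.
by rewrite factorSr // -cats1 dest_cat -IHj.
Qed.

Variable F : nat -> nat -> W -> form W.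
Hypothesis FP : forall x y m (D : pred nat) (lab : nat -> W),
  (forall k, D k -> lab k \in [set: W]) ->
  forall nu, holds D lab nu (F x y m) <-> iprod wone wmul D lab (nu x) (nu y) = m.

(* Variable [2] is bound to the first position, so that [a b] is the image of the prefix up to
   position [nu 0]. *)
Definition flow_form (X Y : var T) : form W :=
  OrL [seq And (Ex 2 (And (Not (Ex 3 (Lt 3 2))) (And (Lab t.1.1 2) (F 2 0 t.1.2)))) (F 0 1 t.2)
      | t : W * W * W <- enum {: W * W * W}
      & (val t.2).2 ((val (wmul t.1.1 t.1.2)).1 (init T), X, Y)].

Lemma holds_flow_form s nu X Y : 0 < nu 0 ->
  holds (fun k => 0 < k) (word_lab s) nu (flow_form X Y) <->
  (val (wprod s (nu 0) (nu 1))).2 ((val (wprod s 0 (nu 0))).1 (init T), X, Y).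
Proof.
move=> nu0; have FPs x y m nu' := FP x y m (fun k _ => in_setT (word_lab s k)) nu'.
have wprod0 : wprod s 0 (nu 0) = wmul (word_lab s 1) (wprod s 1 (nu 0)).
  rewrite (iprod_cat wmulA wmul1 wmulm1 _ _ (leq0n 1) nu0).
  by rewrite (iprodSr wmulA wmul1 wmulm1 _ _ (leqnn 0)) iprod_geq ?wmul1.
rewrite holds_OrL_fin wprod0; split.
  move=> [[[a b] e] [flow /holds_And[/holds_Ex[n n0 H] /FPs E]]].
  move: H; rewrite holds_And holds_Not holds_And holds_Lab FPs upd_eq upd_neq // => -[min [la Eb]].
  have n1 : n = 1.
    apply/eqP; rewrite eqn_leq n0 andbT leqNgt; apply/negP => n1; apply: min.
    by apply/holds_Ex; exists 1; rewrite // holds_Lt upd_eq upd_neq.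
  by move: la Eb; rewrite n1 E => -> ->.
move=> flow; exists (word_lab s 1, wprod s 1 (nu 0), wprod s (nu 0) (nu 1)); split => //.
apply/holds_And; split; last exact/FPs.
apply/holds_Ex; exists 1 => //.
rewrite holds_And holds_Not holds_And holds_Lab FPs upd_eq upd_neq //.
by split=> // /holds_Ex[w w0]; rewrite holds_Lt upd_eq upd_neq //; case: w w0.
Qed.

End Flow.

Lemma flows1_mem (Sig Gam : finType) (T : sst Sig Gam) p (X Y : var T) u :
  one_bounded T -> flows T p X u (dest T p u) Y 1 <-> inr X \in sigma_run T p u Y.
Proof.
move=> oneT; rewrite -has_pred1 has_count /flows.
have : count (pred1 (inr X)) (sigma_run T p u Y) <= 1.
  by apply: (oneT u p X (dest T p u) Y); rewrite /trans_mx eqxx.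
by split=> [[_ ->] | pos]; last split=> //; lia.
Qed.

Theorem mainTheorem6 (Sig Gam : finType) (T : sst Sig Gam) :
  aperiodic T -> one_bounded T ->
  forall X Y : var T,
  exists phi : fo Sig,
    fo_free_in (fun v => v < 2) phi /\
    forall s : nat -> Sig, in_dom T s ->
    forall i j : nat, 1 <= i -> i <= j ->
      (fo_sat s (val2 i j) phi <->
       flows T (run T s i) X (factor s i j) (run T s j) Y 1).
Proof.
move=> aperT oneT X Y.
have [F FP] := aperiodic_iprod_definable (@wmulA _ _ T) (@wmul1 _ _ T) (@wmulm1 _ _ T)
  (word_tmon_aperiodic X aperT) [set: _].
pose phi := fo_of_form (letters_form (wletter T) (flow_form F X Y)).
exists (fo_close (iota 2 (fo_vbound phi)) phi); split.
  apply: fo_close_free_in => //; apply: fo_free_in_vbound => v vb.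
  by rewrite mem_iota; lia.
(* The characterization holds on every string, accepted by [T] or not. *)
move=> s _ i j i1 ij.
pose wprod := iprod (wone T) (@wmul _ _ T) (fun k => 0 < k) (word_lab T s).
rewrite (fo_sat_close (R := fun a b => (val (wprod a b)).2 ((val (wprod 0 a)).1 (init T), X, Y)))
  //; last exact: leq_trans i1 ij.
- rewrite /wprod /val2 /= !val_wprod // !ffunE /= -[init T]/(run T s 0) -run_dest //.
  by rewrite (run_dest T s ij) flows1_mem.
- by apply/allP => v; rewrite mem_iota => /andP[].
by move=> nu nu0 _; rewrite fo_sat_of_form holds_letters_form holds_flow_form.
Qed.
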